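(* Let $(\mathcal N,\mathcal M,\mathbf w,\mathbf v)$ be a chore-allocation instance with $w_1\ge w_i$ for all $i$. Define new weights $w'_i=w_1/2^{p_i}$ where $p_i=\lfloor\log_{1/2}(w_i/w_1)\rfloor$ (so $w_i\le w'_i<2w_i$), keeping agents, items and cost functions unchanged. Then for every agent $a_i$, the weighted maximin share of $a_i$ in the new instance is at most twice the weighted maximin share of $a_i$ in the original instance.
   Context: A chore-allocation instance consists of agents $\mathcal N=\{a_1,\dots,a_n\}$, a finite set $\mathcal M$ of indivisible items, positive weights $w_1,\dots,w_n$, and additive cost functions $v_i:2^{\mathcal M}\to\mathbb R_{\ge0}$. An allocation is an ordered partition $(A_1,\dots,A_n)$ of $\mathcal M$ (bundles may be empty), $\mathcal A$ the set of all allocations. The weighted maximin share of $a_i$ (with respect to weights $w$) is $\mathsf{WMMS}_i=w_i\cdot\min_{(A_1,\dots,A_n)\in\mathcal A}\max_{j\in[n]}\frac{v_i(A_j)}{w_j}$. *)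

From HB Require Import structures.
From mathcomp Require Import all_boot all_order all_algebra.
From mathcomp Require Import all_classical all_reals exp.
Set Implicit Arguments. Unset Strict Implicit. Unset Printing Implicit Defensive.
Import Order.TTheory GRing.Theory Num.Theory.
Local Open Scope ring_scope.

(* Agents are 'I_n.+1 (agent a_1 is ord0), items form a finType M.
   An allocation (ordered partition, bundles possibly empty) is a
   function assigning each item to an agent: A_j = {x | a x = j}. *)

Section WMMS.
Variables (R : realType) (n : nat) (M : finType).

Definition cost (v : 'I_n.+1 -> M -> R) (i : 'I_n.+1) (S : {set M}) : R :=
  \sum_(x in S) v i x.

Definition bundle (a : {ffun M -> 'I_n.+1}) (j : 'I_n.+1) : {set M} :=
  [set x | a x == j].

Definition alloc_val (w : 'I_n.+1 -> R) (v : 'I_n.+1 -> M -> R)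
    (i : 'I_n.+1) (a : {ffun M -> 'I_n.+1}) : R :=
  \big[Num.max/ cost v i (bundle a ord0) / w ord0]_(j < n.+1)
     (cost v i (bundle a j) / w j).

Definition WMMS (w : 'I_n.+1 -> R) (v : 'I_n.+1 -> M -> R) (i : 'I_n.+1) : R :=
  w i * \big[Num.min/ alloc_val w v i [ffun=> ord0]]_(a : {ffun M -> 'I_n.+1})
          alloc_val w v i a.

Definition pexp (w : 'I_n.+1 -> R) (i : 'I_n.+1) : int :=
  Num.floor (ln (w i / w ord0) / ln (2^-1)).

Definition rounded_weights (w : 'I_n.+1 -> R) (i : 'I_n.+1) : R :=
  w ord0 / (2 : R) ^ (pexp w i).

End WMMS.

From HB Require Import structures.
From mathcomp Require Import all_boot all_order all_algebra.
From mathcomp Require Import all_classical all_reals exp.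
Import Order.TTheory GRing.Theory Num.Theory.
Local Open Scope ring_scope.

(* The rounded weights satisfy w_i <= w'_i <= 2 w_i.  The lower bound makes
   every ratio v_i(A_j) / w'_j at most v_i(A_j) / w_j, so the min-max value
   of each allocation, hence their minimum, can only decrease; the prefactor
   w'_i then costs at most the factor 2. *)

Lemma ln_exprz (R : realType) (a : R) (z : int) :
  0 < a -> ln (a ^ z) = z%:~R * ln a.
Proof. by move=> a_gt0; rewrite -powR_intmul ?ltW // ln_powR. Qed.

Lemma exprz_floor_log_bounds (R : realType) (b t : R) : 1 < b -> 0 < t ->
  b ^ Num.floor (ln t / ln b) <= t < b ^ (Num.floor (ln t / ln b) + 1).
Proof.
move=> b_gt1 t_gt0; have b_gt0 := lt_trans ltr01 b_gt1.
have lnb_gt0 : 0 < ln b by exact: ln_gt0.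
have [le_floor lt_floorD1] := andP (floor_itv (ln t / ln b)).
apply/andP; split.
- rewrite -ler_ln ?posrE ?exprz_gt0 // ln_exprz //.
  by rewrite -ler_pdivlMr.
- rewrite -ltr_ln ?posrE ?exprz_gt0 // ln_exprz //.
  by rewrite -ltr_pdivrMr.
Qed.

Lemma pexpE (R : realType) (n : nat) (w : 'I_n.+1 -> R) (i : 'I_n.+1) :
  0 < w i -> 0 < w ord0 ->
  pexp w i = Num.floor (ln (w ord0 / w i) / ln 2).
Proof.
move=> wi_gt0 w0_gt0; rewrite /pexp -(invf_div (w ord0)).
by rewrite !lnV ?posrE ?divr_gt0 // invrN mulrNN.
Qed.

(* The exponent is an arbitrary integer, so w_1 need not be the largest
   weight. *)
Lemma rounded_weights_bounds (R : realType) (n : nat) (w : 'I_n.+1 -> R)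
    (i : 'I_n.+1) :
  0 < w i -> 0 < w ord0 ->
  w i <= rounded_weights w i <= 2 * w i.
Proof.
move=> wi_gt0 w0_gt0; rewrite /rounded_weights pexpE //.
have two_gt1 : 1 < 2 :> R by rewrite ltr1n.
have /andP[pow_le pow_gt] :=
  @exprz_floor_log_bounds _ _ _ two_gt1 (divr_gt0 w0_gt0 wi_gt0).
set k := Num.floor _ in pow_le pow_gt *.
have pow_gt0 : 0 < (2 : R) ^ k by rewrite exprz_gt0.
rewrite exprzDr ?unitf_gt0 // expr1z in pow_gt.
apply/andP; split.
- by rewrite ler_pdivlMr // mulrC -ler_pdivlMr.
- rewrite ler_pdivrMr //; apply: ltW.
  by rewrite mulrC mulrA -ltr_pdivrMr.
Qed.

Section WMMSWeightMonotonicity.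
Variables (R : realType) (n : nat) (M : finType).
Variables (v : 'I_n.+1 -> M -> R) (i : 'I_n.+1).
Hypothesis v_ge0 : forall x, 0 <= v i x.

Lemma cost_ge0 (S : {set M}) : 0 <= cost v i S.
Proof. exact: sumr_ge0. Qed.

Lemma alloc_val_ge0 (w : 'I_n.+1 -> R) (a : {ffun M -> 'I_n.+1}) :
  (forall j, 0 < w j) -> 0 <= alloc_val w v i a.
Proof.
move=> w_gt0; apply: le_trans (le_bigmax _ _ ord0).
by rewrite divr_ge0 ?cost_ge0 ?ltW.
Qed.

Lemma alloc_val_le (w w' : 'I_n.+1 -> R) (a : {ffun M -> 'I_n.+1}) :
  (forall j, 0 < w j <= w' j) -> alloc_val w' v i a <= alloc_val w v i a.
Proof.
move=> le_ww'.
have le_term j : cost v i (bundle a j) / w' j <= cost v i (bundle a j) / w j.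
  have /andP[wj_gt0 le_wj] := le_ww' j.
  by rewrite ler_wpM2l ?cost_ge0 // lef_pV2 ?posrE // (lt_le_trans wj_gt0).
apply: bigmax_le => [|j _]; apply: le_trans (le_term _) _; exact: le_bigmax.
Qed.

Lemma bigmin_alloc_val_le (w w' : 'I_n.+1 -> R) :
  (forall j, 0 < w j <= w' j) ->
  \big[Num.min/alloc_val w' v i [ffun=> ord0]]_a alloc_val w' v i a
    <= \big[Num.min/alloc_val w v i [ffun=> ord0]]_a alloc_val w v i a.
Proof.
move=> le_ww'; apply: le_bigmin => [|a _];
  exact: le_trans (bigmin_le _ _ _) (alloc_val_le _ _ _ le_ww').
Qed.

Lemma WMMS_le (w w' : 'I_n.+1 -> R) (c : R) :
  (forall j, 0 < w j <= w' j) -> w' i <= c * w i ->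
  WMMS w' v i <= c * WMMS w v i.
Proof.
move=> le_ww' le_wi; rewrite /WMMS mulrA.
have w_gt0 j : 0 < w j by case/andP: (le_ww' j).
have w'i_ge0 : 0 <= w' i by case/andP: (le_ww' i) => /lt_le_trans/[apply]/ltW.
apply: le_trans (ler_wpM2l w'i_ge0 (bigmin_alloc_val_le _ _ le_ww')) _.
apply: ler_wpM2r le_wi; apply: le_bigmin => [|a _]; exact: alloc_val_ge0.
Qed.

End WMMSWeightMonotonicity.

Theorem mainTheorem2 (R : realType) (n : nat) (M : finType)
    (w : 'I_n.+1 -> R) (v : 'I_n.+1 -> M -> R)
    (hw_pos : forall i, 0 < w i)
    (hw_max : forall i, w i <= w ord0)
    (hv_nonneg : forall i x, 0 <= v i x) :
  forall i : 'I_n.+1,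
    WMMS (rounded_weights w) v i <= 2 * WMMS w v i.
Proof.
move=> i.
have bounds j := @rounded_weights_bounds _ _ w j (hw_pos j) (hw_pos ord0).
apply: WMMS_le => [x|j|]; first exact: hv_nonneg.
- by have /andP[le_w _] := bounds j; rewrite hw_pos.
- by have /andP[_ le_2w] := bounds i.
Qed.
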